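(* Let $A\in\mathbb{R}^{n\times n}$ be symmetric positive definite, $b\in\mathbb{R}^n$, $B>0$, $L=\lambda_{\max}(A)$. For $y\in\mathbb{R}^n$ and $0<\eta\le 1/n$, define the threshold loop $\theta_0=0$, $\theta_{t+1}=\theta_t+\eta\big[\|\mathcal S_{\theta_t}(y)\|_1-B\big]_+$, where $\mathcal S_\theta(y)$ is computed by the two-layer ReLU network $W_2\,\mathrm{ReLU}(W_1y-\theta[\mathbf 1_n;\mathbf 1_n])$ with $W_1=\begin{bmatrix}I_n\\-I_n\end{bmatrix}$, $W_2=[I_n\ \ -I_n]$. Then $\theta_t$ converges to some $\theta^\star\ge0$ and $\mathcal S_{\theta^\star}(y)=\operatorname{Proj}_{\{\|x\|_1\le B\}}(y)$ is the exact Euclidean projection of $y$ onto the $\ell_1$-ball of radius $B$. Consequently, a gradient step $y_k=x_k-\gamma(Ax_k+b)$ followed by this loop yields $x_{k+1}=\operatorname{Proj}_{\{\|x\|_1\le B\}}\big(x_k-\gamma(Ax_k+b)\big)$, and if $0<\gamma\le1/L$, the iterates $x_k$ converge to an optimal solution of $\min_x \tfrac12x^\top Ax+b^\top x$ subject to $\|x\|_1\le B$.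
   Context: $\mathcal S_\theta(y)=\operatorname{sign}(y)\odot(|y|-\theta)_+$ is coordinatewise soft-thresholding; $[u]_+=\max\{u,0\}$; $\mathrm{ReLU}$ is applied elementwise; $\mathbf 1_n$ is the all-ones vector; $\operatorname{Proj}_{\{\|x\|_1\le B\}}$ denotes Euclidean projection onto $\{x:\|x\|_1\le B\}$. *)

From HB Require Import structures.
From mathcomp Require Import all_boot all_order all_algebra.
From mathcomp Require Import all_classical all_reals all_analysis.
Set Implicit Arguments. Unset Strict Implicit. Unset Printing Implicit Defensive.
Import Order.TTheory GRing.Theory Num.Theory.
Import numFieldNormedType.Exports.
Local Open Scope ring_scope.

Section Defs.
Variables (R : realType) (n : nat).

Definition l1norm (x : 'cV[R]_n) : R := \sum_(i < n) `|x i 0|.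
Definition sqnorm2 (x : 'cV[R]_n) : R := \sum_(i < n) (x i 0) ^+ 2.

Definition soft (theta : R) (y : 'cV[R]_n) : 'cV[R]_n :=
  \col_i (Num.sg (y i 0) * Num.max (`|y i 0| - theta) 0).

Definition relu m (v : 'cV[R]_m) : 'cV[R]_m := map_mx (fun z => Num.max z 0) v.
Definition W1 : 'M[R]_(n + n, n) := col_mx 1%:M (- 1%:M).
Definition W2 : 'M[R]_(n, n + n) := row_mx 1%:M (- 1%:M).
Definition net (theta : R) (y : 'cV[R]_n) : 'cV[R]_n :=
  W2 *m relu (W1 *m y - theta *: const_mx 1).

Fixpoint theta_seq (eta B : R) (y : 'cV[R]_n) (t : nat) : R :=
  match t with
  | 0 => 0
  | t'.+1 => theta_seq eta B y t' +
             eta * Num.max (l1norm (net (theta_seq eta B y t') y) - B) 0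
  end.

Definition is_l1ball_proj (B : R) (y p : 'cV[R]_n) : Prop :=
  l1norm p <= B /\
  forall x : 'cV[R]_n, l1norm x <= B -> sqnorm2 (p - y) <= sqnorm2 (x - y).

Definition spd (A : 'M[R]_n) : Prop :=
  A^T = A /\ forall v : 'cV[R]_n, v != 0 -> 0 < (v^T *m A *m v) 0 0.

Definition is_lambda_max (A : 'M[R]_n) (L : R) : Prop :=
  eigenvalue A L /\ forall a, eigenvalue A a -> a <= L.

Definition quad_obj (A : 'M[R]_n) (b : 'cV[R]_n) (x : 'cV[R]_n) : R :=
  2^-1 * (x^T *m A *m x) 0 0 + (b^T *m x) 0 0.

Definition is_optimal (A : 'M[R]_n) (b : 'cV[R]_n) (B : R) (xs : 'cV[R]_n) : Prop :=
  l1norm xs <= B /\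
  forall x : 'cV[R]_n, l1norm x <= B -> quad_obj A b xs <= quad_obj A b x.

End Defs.

(* The network computes soft-thresholding S_theta coordinatewise.  For theta >= 0,
   a coordinatewise inequality shows that S_theta(y) is the projection of y onto
   the l1-ball as soon as ||S_theta y||_1 <= B and theta (||S_theta y||_1 - B) = 0.
   The map theta |-> ||S_theta y||_1 is nonincreasing and n-Lipschitz, so with
   eta <= 1/n the threshold loop increases without ever pushing ||S_theta y||_1
   below B; it is bounded, and its limit satisfies that complementary slackness.
   For the outer iteration, a minimiser over the (compact) ball exists and is a
   fixed point of the projected gradient map.  The extremes m > 0 and M of the
   Rayleigh quotient of A are attained on the unit sphere, and M is an eigenvalue,
   hence M <= L; so the gradient step is a (1 - gamma m)-contraction in squared
   norm, the projection is nonexpansive, and the iterates converge geometrically. *)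

From HB Require Import structures.
From mathcomp Require Import all_boot all_order all_algebra.
From mathcomp Require Import all_classical all_reals all_analysis.
From mathcomp Require Import ring lra.
Import Order.TTheory GRing.Theory Num.Theory.
Import numFieldNormedType.Exports.
Local Open Scope classical_set_scope.
Local Open Scope ring_scope.
Set Implicit Arguments. Unset Strict Implicit.

Section InnerProduct.
Variables (R : realType) (n : nat).
Implicit Types (a t : R) (u v w : 'cV[R]_n) (A : 'M[R]_n).

Definition dot u v : R := \sum_(i < n) u i 0 * v i 0.

Definition qf A v : R := dot v (A *m v).

Lemma dotC u v : dot u v = dot v u.
Proof. by apply: eq_bigr => i _; rewrite mulrC. Qed.

Lemma dotDl u v w : dot (u + v) w = dot u w + dot v w.
Proof. by rewrite /dot -big_split; apply: eq_bigr => i _; rewrite !mxE mulrDl. Qed.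

Lemma dotDr u v w : dot w (u + v) = dot w u + dot w v.
Proof. by rewrite dotC dotDl !(dotC w). Qed.

Lemma dotZl a u v : dot (a *: u) v = a * dot u v.
Proof. by rewrite /dot mulr_sumr; apply: eq_bigr => i _; rewrite !mxE mulrA. Qed.

Lemma dotZr a u v : dot v (a *: u) = a * dot v u.
Proof. by rewrite dotC dotZl dotC. Qed.

Lemma dotNl u v : dot (- u) v = - dot u v.
Proof. by rewrite -scaleN1r dotZl mulN1r. Qed.

Lemma dotNr u v : dot v (- u) = - dot v u.
Proof. by rewrite dotC dotNl dotC. Qed.

Lemma dotBl u v w : dot (u - v) w = dot u w - dot v w.
Proof. by rewrite dotDl dotNl. Qed.

Lemma dotBr u v w : dot w (u - v) = dot w u - dot w v.
Proof. by rewrite dotDr dotNr. Qed.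

Lemma dot0l v : dot 0 v = 0.
Proof. by rewrite -(scale0r 0) dotZl mul0r. Qed.

Lemma dot_mulmxr A u v : dot u (A *m v) = dot (A^T *m u) v.
Proof.
rewrite /dot; under eq_bigr => i _ do rewrite mxE mulr_sumr.
rewrite exchange_big /=; apply: eq_bigr => j _; rewrite mxE mulr_suml.
by apply: eq_bigr => i _; rewrite !mxE mulrCA mulrA.
Qed.

Lemma dot_sym_mulmx A u v : A^T = A -> dot u (A *m v) = dot v (A *m u).
Proof. by move=> symA; rewrite dot_mulmxr symA dotC. Qed.

Lemma sqnormE v : sqnorm2 v = dot v v.
Proof. by apply: eq_bigr => i _; rewrite expr2. Qed.

Lemma sqnorm_ge0 v : 0 <= sqnorm2 v.
Proof. by apply: sumr_ge0 => i _; rewrite sqr_ge0. Qed.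

Lemma sqnorm_eq0 v : (sqnorm2 v == 0) = (v == 0).
Proof.
apply/idP/eqP => [|->]; last by rewrite sqnormE dot0l.
move/eqP/(psumr_eq0P (fun i _ => sqr_ge0 (v i 0))) => v0.
by apply/matrixP => i j; rewrite (ord1 j) mxE; apply/eqP; rewrite -sqrf_eq0 v0.
Qed.

Lemma sqnorm_gt0 v : (0 < sqnorm2 v) = (v != 0).
Proof. by rewrite lt_def sqnorm_eq0 sqnorm_ge0 andbT. Qed.

Lemma sqnormD u v : sqnorm2 (u + v) = sqnorm2 u + 2 * dot u v + sqnorm2 v.
Proof. rewrite !sqnormE dotDl !dotDr (dotC v u); ring. Qed.

Lemma sqnormN v : sqnorm2 (- v) = sqnorm2 v.
Proof. by rewrite !sqnormE dotNl dotNr opprK. Qed.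

Lemma sqnormZ a v : sqnorm2 (a *: v) = a ^+ 2 * sqnorm2 v.
Proof. rewrite !sqnormE dotZl dotZr; ring. Qed.

Lemma sqnormB u v : sqnorm2 (u - v) = sqnorm2 u - 2 * dot u v + sqnorm2 v.
Proof. by rewrite sqnormD sqnormN dotNr mulrN. Qed.

Lemma coord_sqr_le_sqnorm v i : v i 0 ^+ 2 <= sqnorm2 v.
Proof. by rewrite /sqnorm2 (bigD1 i) //= lerDl; apply: sumr_ge0 => k _; rewrite sqr_ge0. Qed.

Lemma qf0 A : qf A 0 = 0.
Proof. by rewrite /qf dot0l. Qed.

Lemma qfZ A a v : qf A (a *: v) = a ^+ 2 * qf A v.
Proof. by rewrite /qf -scalemxAr dotZl dotZr mulrA -expr2. Qed.

Lemma qfE A v : (v^T *m A *m v) 0 0 = qf A v.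
Proof. by rewrite -mulmxA mxE; apply: eq_bigr => i _; rewrite mxE. Qed.

Lemma qf_sym_expand A u v t : A^T = A ->
  qf A (u + t *: v) = qf A u + 2 * t * dot v (A *m u) + t ^+ 2 * qf A v.
Proof.
move=> symA; rewrite /qf mulmxDr -scalemxAr !dotDl !dotDr !dotZl !dotZr.
rewrite (dot_sym_mulmx _ u) //; ring.
Qed.

Lemma l1normD u v : l1norm (u + v) <= l1norm u + l1norm v.
Proof. by rewrite /l1norm -big_split; apply: ler_sum => i _; rewrite mxE ler_normD. Qed.

Lemma l1normZ a v : l1norm (a *: v) = `|a| * l1norm v.
Proof. by rewrite /l1norm mulr_sumr; apply: eq_bigr => i _; rewrite mxE normrM. Qed.

Lemma coord_le_l1norm v i : `|v i 0| <= l1norm v.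
Proof. by rewrite /l1norm (bigD1 i) //= lerDl; apply: sumr_ge0 => k _. Qed.

End InnerProduct.

Lemma lin_coef_ge0 (R : realFieldType) (a b : R) :
  (forall t, 0 < t -> t <= 1 -> 0 <= a * t + b * t ^+ 2) -> 0 <= a.
Proof.
move=> h; rewrite leNgt; apply/negP => a_lt0.
have b_ge0 := normr_ge0 b.
pose t := - a / (- a + `|b| + 1).
have den_gt0 : 0 < - a + `|b| + 1 by lra.
have t_gt0 : 0 < t by rewrite divr_gt0 //; lra.
have t_le1 : t <= 1 by rewrite ler_pdivrMr //; lra.
have bt_lt : `|b| * t < - a by rewrite mulrA ltr_pdivrMr //; nra.
have : b * t <= `|b| * t by rewrite ler_wpM2r ?ler_norm // ltW.
have := h t t_gt0 t_le1; nra.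
Qed.

Section ConvexProjection.
Variables (R : realType) (n : nat) (C : set 'cV[R]_n).
Hypothesis C_convex :
  forall u v t, 0 <= t -> t <= 1 -> C u -> C v -> C (u + t *: (v - u)).
Implicit Types (x z p : 'cV[R]_n).

Definition is_proj z p := C p /\ forall x, C x -> sqnorm2 (p - z) <= sqnorm2 (x - z).

Lemma is_proj_variational z p x : is_proj z p -> C x -> 0 <= dot (p - z) (x - p).
Proof.
move=> [Cp p_min] Cx; rewrite -(pmulr_rge0 _ (ltr0Sn _ 1)).
apply: (@lin_coef_ge0 _ _ (sqnorm2 (x - p))) => t t_gt0 t_le1.
have := p_min _ (C_convex (ltW t_gt0) t_le1 Cp Cx).
rewrite addrAC [sqnorm2 (_ + t *: _)]sqnormD sqnormZ dotZr; lra.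
Qed.

Lemma is_proj_nonexpansive z1 z2 p1 p2 : is_proj z1 p1 -> is_proj z2 p2 ->
  sqnorm2 (p1 - p2) <= sqnorm2 (z1 - z2).
Proof.
move=> h1 h2.
have := is_proj_variational h1 h2.1; have := is_proj_variational h2 h1.1.
have := sqnorm_ge0 ((z1 - z2) - (p1 - p2)).
rewrite !sqnormE !(dotBl, dotBr) (dotC p2 p1) (dotC z2 z1) (dotC z1 p1).
rewrite (dotC z2 p1) (dotC z1 p2) (dotC z2 p2); lra.
Qed.

Lemma quad_objE A b x : quad_obj A b x = 2^-1 * qf A x + dot b x.
Proof. by rewrite /quad_obj qfE mxE; congr (_ + _); apply: eq_bigr => i _; rewrite mxE. Qed.

Lemma quad_obj_expand A b x d t : A^T = A ->
  quad_obj A b (x + t *: d) =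
  quad_obj A b x + t * dot d (A *m x + b) + t ^+ 2 * (2^-1 * qf A d).
Proof.
by move=> symA; rewrite !quad_objE qf_sym_expand // dotDr dotZr dotDr (dotC b d); field.
Qed.

Lemma quad_obj_min_is_proj A b gamma xs : A^T = A -> 0 < gamma -> C xs ->
  (forall x, C x -> quad_obj A b xs <= quad_obj A b x) ->
  is_proj (xs - gamma *: (A *m xs + b)) xs.
Proof.
move=> symA gamma_gt0 Cxs xs_min; split => // x Cx.
set g := A *m xs + b.
have first_order : 0 <= dot (x - xs) g.
  apply: (@lin_coef_ge0 _ _ (2^-1 * qf A (x - xs))) => t t_gt0 t_le1.
  have := xs_min _ (C_convex (ltW t_gt0) t_le1 Cxs Cx).
  rewrite quad_obj_expand //; lra.
have -> : xs - (xs - gamma *: g) = gamma *: g by rewrite opprB addrC subrK.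
have -> : x - (xs - gamma *: g) = (x - xs) + gamma *: g by rewrite opprB addrCA addrC.
rewrite sqnormD sqnormZ dotZr.
have := sqnorm_ge0 (x - xs); have := mulr_ge0 (ltW gamma_gt0) first_order; lra.
Qed.

End ConvexProjection.

Lemma l1ball_convex (R : realType) n (B : R) (u v : 'cV[R]_n) t :
  0 <= t -> t <= 1 -> l1norm u <= B -> l1norm v <= B -> l1norm (u + t *: (v - u)) <= B.
Proof.
move=> t_ge0 t_le1 uB vB.
have -> : u + t *: (v - u) = (1 - t) *: u + t *: v.
  by rewrite scalerBr scalerBl scale1r addrA addrAC.
apply: le_trans (l1normD _ _) _; rewrite !l1normZ (ger0_norm t_ge0) ger0_norm; nra.
Qed.

Section SoftThresholding.
Variables (R : realType) (n : nat).
Implicit Types (a b : R) (x y : 'cV[R]_n).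

Lemma net_soft a y : 0 <= a -> net a y = soft a y.
Proof.
move=> a_ge0; rewrite /net /W1 /W2 mul_col_mx !mul1mx mulNmx mul1mx.
rewrite -(col_mx_const n n 1) scale_col_mx opp_col_mx add_col_mx /relu map_col_mx.
rewrite mul_row_col mul1mx mulNmx mul1mx.
apply/matrixP => i j; rewrite !mxE (ord1 j) !mulr1.
case: (ltrgtP (y i 0) 0) => [y_lt0|y_gt0|->].
- rewrite ltr0_sg // ltr0_norm // !maxEle; do ! case: leP => ?; lra.
- rewrite gtr0_sg // gtr0_norm // !maxEle; do ! case: leP => ?; lra.
- by rewrite sgr0 mul0r !maxEle; do ! case: leP => ?; lra.
Qed.

Lemma soft_coord_norm a y i : 0 <= a -> `|soft a y i 0| = Num.max (`|y i 0| - a) 0.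
Proof.
move=> a_ge0; rewrite mxE normrM normr_sg.
have [->|y_neq0] := eqVneq (y i 0) 0; last by rewrite mul1r ger0_norm // le_max lexx orbT.
by rewrite normr0 mul0r sub0r max_r // oppr_le0.
Qed.

Lemma l1norm_soft a y : 0 <= a -> l1norm (soft a y) = \sum_(i < n) Num.max (`|y i 0| - a) 0.
Proof. by move=> a_ge0; apply: eq_bigr => i _; rewrite soft_coord_norm. Qed.

Lemma l1norm_soft_nonincreasing a b y : 0 <= a -> a <= b ->
  l1norm (soft b y) <= l1norm (soft a y).
Proof.
move=> a_ge0 ab; rewrite !l1norm_soft ?(le_trans a_ge0 ab) //.
apply: ler_sum => i _; have [u ->] : exists u : R, `|y i 0| = u by eexists.
by case: (leP (u - a) 0) => ?; case: (leP (u - b) 0) => ?; lra.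
Qed.

Lemma l1norm_soft_lipschitz a b y : 0 <= a -> a <= b ->
  l1norm (soft a y) <= l1norm (soft b y) + n%:R * (b - a).
Proof.
move=> a_ge0 ab; rewrite !l1norm_soft ?(le_trans a_ge0 ab) //.
have -> : n%:R * (b - a) = \sum_(i < n) (b - a) by rewrite sumr_const card_ord mulr_natl.
rewrite -big_split /=.
apply: ler_sum => i _; have [u ->] : exists u : R, `|y i 0| = u by eexists.
by case: (leP (u - a) 0) => ?; case: (leP (u - b) 0) => ?; lra.
Qed.

Lemma l1norm_soft_gt0 a y : 0 <= a -> 0 < l1norm (soft a y) -> a <= l1norm y.
Proof.
move=> a_ge0; apply: contraTT; rewrite -ltNge -leNgt => a_gt.
rewrite l1norm_soft // big1 // => i _; apply/max_r.
by have := coord_le_l1norm y i; lra.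
Qed.

Lemma soft_coord_ineq a (x y : R) : 0 <= a ->
  2 * a * (`|Num.sg y * Num.max (`|y| - a) 0| - `|x|) <=
  (x - y) ^+ 2 - (Num.sg y * Num.max (`|y| - a) 0 - y) ^+ 2.
Proof.
move=> a_ge0.
have x_le := ler_norm x; have xN_le : - x <= `|x| by rewrite -normrN ler_norm.
have ax_le : a * x <= a * `|x| by rewrite ler_wpM2l.
have axN_le : a * - x <= a * `|x| by rewrite ler_wpM2l.
have [nx nx_def] : exists nx : R, `|x| = nx by eexists.
rewrite nx_def in x_le xN_le ax_le axN_le *.
have := sqr_ge0 (x - y - a); have := sqr_ge0 (x - y + a).
case: (leP (`|y| - a) 0) => y_small.
  rewrite mulr0 normr0 sub0r.
  have : `|y| <= a by lra.
  by case: (ltrgtP y 0) => [y_lt0|y_gt0|->];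
    rewrite ?(ltr0_norm y_lt0) ?(gtr0_norm y_gt0) ?normr0; nra.
case: (ltrgtP y 0) => [y_lt0|y_gt0|y0].
- rewrite ltr0_norm // in y_small *; rewrite ltr0_sg // mulN1r normrN ger0_norm; nra.
- rewrite gtr0_norm // in y_small *; rewrite gtr0_sg // mul1r ger0_norm; nra.
- by rewrite y0 normr0 in y_small; lra.
Qed.

Lemma soft_is_l1ball_proj B a y : 0 <= a -> l1norm (soft a y) <= B ->
  a * (l1norm (soft a y) - B) = 0 -> is_l1ball_proj B y (soft a y).
Proof.
move=> a_ge0 softB slack; split => // x xB.
rewrite -subr_ge0 /sqnorm2 -sumrB.
have key : 2 * a * (l1norm (soft a y) - l1norm x) <=
    \sum_(i < n) ((x - y) i 0 ^+ 2 - (soft a y - y) i 0 ^+ 2).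
  rewrite /l1norm -sumrB mulr_sumr; apply: ler_sum => i _.
  by rewrite !mxE soft_coord_ineq.
apply: le_trans key; have : 0 <= B - l1norm x by rewrite subr_ge0.
move/(mulr_ge0 a_ge0); nra.
Qed.

End SoftThresholding.

Section ThresholdIteration.
Variables (R : realType) (f : R -> R) (c eta B M : R) (th : nat -> R).
Hypothesis f_nonincreasing : forall a b, 0 <= a -> a <= b -> f b <= f a.
Hypothesis f_lipschitz : forall a b, 0 <= a -> a <= b -> f a <= f b + c * (b - a).
Hypothesis f_bounded : forall a, 0 <= a -> B <= f a -> a <= M.
Hypotheses (c_ge0 : 0 <= c) (eta_gt0 : 0 < eta) (eta_c_le1 : eta * c <= 1).
Hypothesis th0 : th 0 = 0.
Hypothesis thS : forall t, th t.+1 = th t + eta * Num.max (f (th t) - B) 0.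

Lemma iter_le_succ t : th t <= th t.+1.
Proof. by rewrite thS lerDl mulr_ge0 ?(ltW eta_gt0) // le_max lexx orbT. Qed.

Lemma iter_ge0 t : 0 <= th t.
Proof. by elim: t => [|t IH]; [rewrite th0 | exact: le_trans (iter_le_succ t)]. Qed.

Lemma iter_eq0 : f 0 <= B -> forall t, th t = 0.
Proof.
move=> f0_le; elim=> [//|t IH].
by rewrite thS IH max_r ?mulr0 ?addr0 // subr_le0.
Qed.

Section AboveLevel.
Hypothesis B_le_f0 : B <= f 0.

(* One step lowers f by at most c * eta * (f - B) <= f - B. *)
Lemma iter_above t : B <= f (th t).
Proof.
elim: t => [|t IH]; first by rewrite th0.
have := f_lipschitz (iter_ge0 t) (iter_le_succ t); rewrite thS addrAC subrr add0r.
rewrite max_l ?subr_ge0 //.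
have : c * (eta * (f (th t) - B)) <= f (th t) - B.
  by rewrite mulrA [c * eta]mulrC ler_piMl // subr_ge0.
lra.
Qed.

Let ths := sup (range th).

Let range_has_sup : has_sup (range th).
Proof.
split; first by exists (th 0), 0.
by exists M => _ [t _ <-]; exact: f_bounded (iter_ge0 t) (iter_above t).
Qed.

Let iter_le_sup t : th t <= ths.
Proof. by apply: (sup_upper_bound range_has_sup); exists t. Qed.

Lemma sup_iter_ge0 : 0 <= ths.
Proof. exact: le_trans (iter_ge0 0) (iter_le_sup 0). Qed.

Lemma iter_cvg_sup : th @ \oo --> ths.
Proof.
apply: nondecreasing_cvgn; first exact/nondecreasing_seqP/iter_le_succ.
by exists M => _ [t _ <-]; exact: f_bounded (iter_ge0 t) (iter_above t).
Qed.

Lemma f_sup_le : f ths <= B.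
Proof.
rewrite leNgt; apply/negP => f_gt.
have step_gt0 : 0 < eta * (f ths - B) by rewrite mulr_gt0 // subr_gt0.
have [_ [t _ <-] t_close] := sup_adherent step_gt0 range_has_sup.
have : eta * (f ths - B) <= eta * Num.max (f (th t) - B) 0.
  by rewrite ler_pM2l // le_max lerD2r f_nonincreasing ?iter_ge0 ?iter_le_sup.
rewrite -/ths in t_close; have := iter_le_sup t.+1; rewrite thS; lra.
Qed.

Lemma f_sup_ge : B <= f ths.
Proof.
rewrite leNgt; apply/negP => f_lt.
have c1_gt0 : 0 < c + 1 := ltr_wpDl c_ge0 ltr01.
have e_gt0 : 0 < (B - f ths) / (c + 1) by rewrite divr_gt0 ?subr_gt0.
have [_ [t _ <-] t_close] := sup_adherent e_gt0 range_has_sup.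
have : c * (ths - th t) < B - f ths.
  apply: le_lt_trans (_ : c * ((B - f ths) / (c + 1)) < _).
    by rewrite ler_wpM2l //; rewrite -/ths in t_close; lra.
  by rewrite mulrCA gtr_pMr ?subr_gt0 // ltr_pdivrMr; lra.
have := f_lipschitz (iter_ge0 t) (iter_le_sup t); have := iter_above t; lra.
Qed.

End AboveLevel.

Lemma threshold_iteration_cvg : exists ths,
  [/\ th @ \oo --> ths, 0 <= ths, f ths <= B & ths * (f ths - B) = 0].
Proof.
have [f0_le|f0_gt] := leP (f 0) B.
  exists 0; rewrite mul0r; split => //.
  by rewrite (_ : th = fun=> 0); [exact: cvg_cst | apply: funext; exact: iter_eq0].
have B_le_f0 := ltW f0_gt.
exists (sup (range th)); split.
- exact: iter_cvg_sup.
- exact: sup_iter_ge0.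
- exact: f_sup_le.
- by rewrite [f _](@le_anti _ _ _ B) ?subrr ?mulr0 // f_sup_le // f_sup_ge.
Qed.

End ThresholdIteration.

Section ThresholdLoop.
Variables (R : realType) (n : nat) (eta B : R) (y : 'cV[R]_n).
Hypotheses (n_gt0 : (0 < n)%N) (B_gt0 : 0 < B).
Hypotheses (eta_gt0 : 0 < eta) (eta_le : eta <= n%:R^-1).

Lemma theta_seq_ge0 t : 0 <= theta_seq eta B y t.
Proof.
elim: t => [//|t IH] /=.
by rewrite addr_ge0 // mulr_ge0 ?(ltW eta_gt0) // le_max lexx orbT.
Qed.

Lemma theta_seqS t : theta_seq eta B y t.+1 =
  theta_seq eta B y t + eta * Num.max (l1norm (soft (theta_seq eta B y t) y) - B) 0.
Proof. by rewrite /= net_soft // theta_seq_ge0. Qed.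

Lemma theta_seq_cvg_proj : exists ths : R, 0 <= ths /\
  theta_seq eta B y @ \oo --> ths /\ is_l1ball_proj B y (net ths y).
Proof.
have eta_n : eta * n%:R <= 1 by rewrite -ler_pdivlMr ?ltr0n // div1r.
have soft_bounded a : 0 <= a -> B <= l1norm (soft a y) -> a <= l1norm y.
  by move=> a_ge0 /(lt_le_trans B_gt0); exact: l1norm_soft_gt0.
have [ths [th_cvg ths_ge0 ths_le slack]] := threshold_iteration_cvg
  (fun a b => @l1norm_soft_nonincreasing R n a b y)
  (fun a b => @l1norm_soft_lipschitz R n a b y)
  soft_bounded (ler0n _ n) eta_gt0 eta_n (erefl : theta_seq eta B y 0 = 0) theta_seqS.
by exists ths; rewrite net_soft //; split; [|split; [|exact: soft_is_l1ball_proj]].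
Qed.

End ThresholdLoop.

Section Compactness.
Variables (R : realType) (n : nat).
Implicit Types (A : 'M[R]_n) (b : 'cV[R]_n) (S : set 'cV[R]_n) (F : 'cV[R]_n -> R).

Lemma trmx_continuous m p : continuous (@trmx R m p).
Proof.
move=> M s /nbhs_ballP [e e_gt0 Ms]; apply/nbhs_ballP; exists e => //= N [_ MN].
by apply: Ms; split => // i j; rewrite !mxE; exact: MN.
Qed.

Lemma sum_continuous (T : topologicalType) (G : 'I_n -> T -> R) :
  (forall i, continuous (G i)) -> continuous (fun x => \sum_(i < n) G i x).
Proof.
by move=> G_cont; apply: continuous_big => [|i _]; [exact: add_continuous | exact: G_cont].
Qed.

Lemma addf_continuous (T : topologicalType) (G H : T -> R) :
  continuous G -> continuous H -> continuous (fun x => G x + H x).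
Proof. by move=> G_cont H_cont x; exact: (continuousD (G_cont x) (H_cont x)). Qed.

Lemma mulf_continuous (T : topologicalType) (G H : T -> R) :
  continuous G -> continuous H -> continuous (fun x => G x * H x).
Proof. by move=> G_cont H_cont x; exact: (continuousM (G_cont x) (H_cont x)). Qed.

Lemma dot_continuous b : continuous (dot b).
Proof.
apply: sum_continuous => i; apply: mulf_continuous; first exact: cst_continuous.
exact: coord_continuous.
Qed.

Lemma qf_continuous A : continuous (qf A).
Proof.
have -> : qf A = fun v => \sum_(i < n) v i 0 * \sum_(j < n) A i j * v j 0.
  by apply: funext => v; apply: eq_bigr => i _; rewrite mxE.
apply: sum_continuous => i; apply: mulf_continuous; first exact: coord_continuous.
apply: sum_continuous => j; apply: mulf_continuous; first exact: cst_continuous.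
exact: coord_continuous.
Qed.

Lemma sqnorm_continuous : continuous (@sqnorm2 R n).
Proof.
have -> : @sqnorm2 R n = qf 1%:M.
  by apply: funext => v; rewrite sqnormE /qf mul1mx.
exact: qf_continuous.
Qed.

Lemma l1norm_continuous : continuous (@l1norm R n).
Proof.
apply: sum_continuous => i v.
by apply: continuous_comp; [exact: coord_continuous | exact: norm_continuous].
Qed.

Lemma quad_obj_continuous A b : continuous (quad_obj A b).
Proof.
have -> : quad_obj A b = fun v => 2^-1 * qf A v + dot b v.
  by apply: funext => v; rewrite quad_objE.
apply: addf_continuous; last exact: dot_continuous.
by apply: mulf_continuous; [exact: cst_continuous | exact: qf_continuous].
Qed.

Lemma closed_preimage_le (T : topologicalType) (G : T -> R) c :
  continuous G -> closed [set x | G x <= c].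
Proof. by move=> G_cont; apply: (proj1 (continuous_closedP G) G_cont _ (@closed_le _ c)). Qed.

Lemma closed_preimage_eq (T : topologicalType) (G : T -> R) c :
  continuous G -> closed [set x | G x = c].
Proof. by move=> G_cont; apply: (proj1 (continuous_closedP G) G_cont _ (@closed_eq _ c)). Qed.

(* The library proves compactness of boxes for row vectors only. *)
Lemma cV_compact S c :
  closed S -> (forall v, S v -> forall i, `|v i 0| <= c) -> compact S.
Proof.
move=> S_closed S_bounded.
have -> : S = trmx @` [set r : 'rV[R]_n | S r^T].
  by apply/seteqP; split => [v Sv|_ [r Sr <-] //]; exists v^T; rewrite /= trmxK.
apply: continuous_compact; first exact/continuous_subspaceT/trmx_continuous.
apply: (subclosed_compact _ (@rV_compact _ _ (fun=> `[- c, c]%classic) _)).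
- exact: (proj1 (continuous_closedP _) (@trmx_continuous 1 n) _ S_closed).
- by move=> _; exact: segment_compact.
- move=> r /S_bounded r_bounded i; rewrite /= in_itv /= -ler_norml.
  by have := r_bounded i; rewrite mxE.
Qed.

Lemma cV_min_attained S F c : S !=set0 -> closed S ->
  (forall v, S v -> forall i, `|v i 0| <= c) -> continuous F ->
  exists2 v, S v & forall w, S w -> F v <= F w.
Proof.
move=> S0 S_closed S_bounded F_cont.
have [v] := compact_EVT_min S0 (cV_compact S_closed S_bounded) (continuous_subspaceT F_cont).
by rewrite inE => Sv v_min; exists v => // w Sw; apply: v_min; rewrite inE.
Qed.

Lemma cV_max_attained S F c : S !=set0 -> closed S ->
  (forall v, S v -> forall i, `|v i 0| <= c) -> continuous F ->
  exists2 v, S v & forall w, S w -> F w <= F v.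
Proof.
move=> S0 S_closed S_bounded F_cont.
have [v] := compact_EVT_max S0 (cV_compact S_closed S_bounded) (continuous_subspaceT F_cont).
by rewrite inE => Sv v_max; exists v => // w Sw; apply: v_max; rewrite inE.
Qed.

End Compactness.

Section QuadraticFormBounds.
Variables (R : realType) (n : nat).
Implicit Types (A : 'M[R]_n) (c d v w : 'cV[R]_n).

Lemma unit_vector_exists : (0 < n)%N -> exists v : 'cV[R]_n, sqnorm2 v = 1.
Proof.
move=> n_gt0; pose k := Ordinal n_gt0; exists (delta_mx k 0).
rewrite /sqnorm2 (bigD1 k) //= big1 => [|j /negbTE jk]; first by rewrite !mxE !eqxx expr1n addr0.
by rewrite !mxE jk expr0n.
Qed.

Lemma unit_vector_coord_bounded v i : sqnorm2 v = 1 -> `|v i 0| <= 1.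
Proof.
move=> v1; have := coord_sqr_le_sqnorm v i; rewrite v1 => coord_le.
by rewrite ler_norml; apply/andP; split; nra.
Qed.

Lemma qf_normalize A v : v != 0 ->
  exists2 w, sqnorm2 w = 1 & qf A v = sqnorm2 v * qf A w.
Proof.
rewrite -sqnorm_gt0 => s_gt0; exists ((Num.sqrt (sqnorm2 v))^-1 *: v).
  by rewrite sqnormZ exprVn sqr_sqrtr ?ltW // mulVf ?gt_eqF.
by rewrite qfZ exprVn sqr_sqrtr ?ltW // mulrA mulfV ?gt_eqF ?mul1r.
Qed.

Lemma qf_lower_homogeneous A m :
  (forall w, sqnorm2 w = 1 -> m <= qf A w) -> forall v, m * sqnorm2 v <= qf A v.
Proof.
move=> m_le v; have [->|v_neq0] := eqVneq v 0; first by rewrite qf0 sqnormE dot0l mulr0.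
have [w w1 ->] := qf_normalize A v_neq0.
by rewrite mulrC; apply: ler_wpM2l; [exact: sqnorm_ge0 | exact: m_le].
Qed.

Lemma qf_upper_homogeneous A M :
  (forall w, sqnorm2 w = 1 -> qf A w <= M) -> forall v, qf A v <= M * sqnorm2 v.
Proof.
move=> le_M v; have [->|v_neq0] := eqVneq v 0; first by rewrite qf0 sqnormE dot0l mulr0.
have [w w1 ->] := qf_normalize A v_neq0.
by rewrite [M * _]mulrC; apply: ler_wpM2l; [exact: sqnorm_ge0 | exact: le_M].
Qed.

Lemma psd_qf_eq0 A c : A^T = A -> (forall v, 0 <= qf A v) -> qf A c = 0 -> A *m c = 0.
Proof.
move=> symA psdA qc0; apply/eqP; rewrite -sqnorm_eq0 eq_le sqnorm_ge0 andbT sqnormE.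
have expand t : qf A (c - t *: (A *m c)) =
    (- 2 * dot (A *m c) (A *m c)) * t + qf A (A *m c) * t ^+ 2.
  by rewrite -scaleNr qf_sym_expand // qc0 sqrrN; ring.
suff : 0 <= - 2 * dot (A *m c) (A *m c) by lra.
apply: (@lin_coef_ge0 _ _ (qf A (A *m c))) => t _ _.
by rewrite -expand.
Qed.

Lemma qf_max_eigenvector A M c : A^T = A ->
  (forall v, qf A v <= M * sqnorm2 v) -> qf A c = M * sqnorm2 c -> A *m c = M *: c.
Proof.
move=> symA le_M qc_eq.
have qf_shift v : qf (M%:M - A) v = M * sqnorm2 v - qf A v.
  by rewrite /qf mulmxBl mul_scalar_mx dotBr dotZr sqnormE.
have : (M%:M - A) *m c = 0.
  apply: psd_qf_eq0; first by rewrite linearB /= tr_scalar_mx symA.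
    by move=> v; rewrite qf_shift subr_ge0.
  by rewrite qf_shift qc_eq subrr.
by rewrite mulmxBl mul_scalar_mx => /eqP; rewrite subr_eq0 => /eqP <-.
Qed.

Lemma qf_le_lambda_max A L : (0 < n)%N -> A^T = A -> is_lambda_max A L ->
  forall v, qf A v <= L * sqnorm2 v.
Proof.
move=> n_gt0 symA [_ L_max].
have [c c_unit c_max] := cV_max_attained (unit_vector_exists n_gt0)
  (closed_preimage_eq (c := 1) (@sqnorm_continuous R n))
  (fun v (v1 : sqnorm2 v = 1) i => unit_vector_coord_bounded i v1) (qf_continuous (A := A)).
have le_M := qf_upper_homogeneous c_max.
have : eigenvalue A (qf A c).
  have c_eigen : A *m c = qf A c *: c.
    by apply: qf_max_eigenvector symA le_M _; rewrite c_unit mulr1.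
  apply/eigenvalueP; exists c^T; first by rewrite -{1}symA -trmx_mul c_eigen linearZ.
  by rewrite trmx_eq0 -sqnorm_eq0 c_unit oner_eq0.
move=> /L_max M_le_L v; apply: le_trans (le_M v) _.
by apply: ler_wpM2r; [exact: sqnorm_ge0 | exact: M_le_L].
Qed.

Lemma spd_qf_bounds A L : (0 < n)%N -> spd A -> is_lambda_max A L ->
  exists m, [/\ 0 < m, m <= L, forall v, m * sqnorm2 v <= qf A v
                                 & forall v, qf A v <= L * sqnorm2 v].
Proof.
move=> n_gt0 [symA A_pos] L_max.
have le_L := qf_le_lambda_max n_gt0 symA L_max.
have [c c_unit c_min] := cV_min_attained (unit_vector_exists n_gt0)
  (closed_preimage_eq (c := 1) (@sqnorm_continuous R n))
  (fun v (v1 : sqnorm2 v = 1) i => unit_vector_coord_bounded i v1) (qf_continuous (A := A)).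
exists (qf A c); split => //.
- by rewrite -qfE A_pos // -sqnorm_eq0 c_unit oner_eq0.
- by have := le_L c; rewrite c_unit mulr1.
- exact: qf_lower_homogeneous.
Qed.

Lemma sqnorm_mulmx_le A L d : A^T = A -> 0 < L ->
  (forall v, 0 <= qf A v) -> (forall v, qf A v <= L * sqnorm2 v) ->
  sqnorm2 (A *m d) <= L * qf A d.
Proof.
move=> symA L_gt0 psdA le_L.
(* expand 0 <= qf A (d - L^-1 A d), then bound qf A (A d) by L |A d|^2 *)
have := psdA (d - L^-1 *: (A *m d)).
rewrite -scaleNr qf_sym_expand // -sqnormE sqrrN mulrN.
have P_le : L^-1 ^+ 2 * qf A (A *m d) <= L^-1 * sqnorm2 (A *m d).
  rewrite expr2 -mulrA ler_pM2l ?invr_gt0 // ler_pdivrMl //; exact: le_L.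
rewrite -ler_pdivrMl //; lra.
Qed.

Lemma gradient_step_contraction A m L gamma d : A^T = A -> 0 <= m -> 0 < L ->
  (forall v, m * sqnorm2 v <= qf A v) -> (forall v, qf A v <= L * sqnorm2 v) ->
  0 < gamma -> gamma * L <= 1 ->
  sqnorm2 (d - gamma *: (A *m d)) <= (1 - gamma * m) * sqnorm2 d.
Proof.
move=> symA m_ge0 L_gt0 m_le le_L gamma_gt0 gammaL_le1.
have psdA v : 0 <= qf A v by apply: le_trans (m_le v); rewrite mulr_ge0 ?sqnorm_ge0.
have X_le := sqnorm_mulmx_le d symA L_gt0 psdA le_L.
rewrite sqnormB sqnormZ dotZr -/(qf A d).
have step_le : gamma ^+ 2 * sqnorm2 (A *m d) <= gamma * qf A d.
  apply: le_trans (_ : gamma ^+ 2 * (L * qf A d) <= _).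
    by apply: ler_wpM2l; [exact: sqr_ge0 | exact: X_le].
  rewrite (_ : _ * (L * _) = gamma * L * (gamma * qf A d)); last by ring.
  by apply: ler_piMl => //; exact: mulr_ge0 (ltW gamma_gt0) (psdA d).
have := ler_wpM2l (ltW gamma_gt0) (m_le d); lra.
Qed.

End QuadraticFormBounds.

Section Convergence.
Variables (R : realType) (n : nat).

Lemma mx_norm_le_sqrt_sqnorm (v : 'cV[R]_n) : `|v| <= Num.sqrt (sqnorm2 v).
Proof.
have -> : `|v| = \big[Num.max/0]_ij `|v ij.1 ij.2| := mx_normrE v.
apply: bigmax_le => [|[i j] _] /=; first exact: sqrtr_ge0.
by rewrite (ord1 j) -sqrtr_sqr ler_sqrt ?coord_sqr_le_sqnorm ?sqnorm_ge0.
Qed.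

Lemma geometric_cvg (x : nat -> 'cV[R]_n) xs rho : 0 <= rho -> rho < 1 ->
  (forall k, sqnorm2 (x k.+1 - xs) <= rho * sqnorm2 (x k - xs)) -> x @ \oo --> xs.
Proof.
move=> rho_ge0 rho_lt1 step.
have geo k : sqnorm2 (x k - xs) <= rho ^+ k * sqnorm2 (x 0 - xs).
  elim: k => [|k IH]; first by rewrite expr0 mul1r.
  by apply: le_trans (step k) _; rewrite exprS -mulrA ler_wpM2l.
have rho_norm_lt1 : `|rho| < 1 by rewrite ger0_norm.
have /cvgrPdist_lt geo_cvg : (fun k => rho ^+ k * sqnorm2 (x 0 - xs)) @ \oo --> 0.
  rewrite -(mul0r (sqnorm2 (x 0 - xs))).
  by apply: cvgM; [exact: cvg_expr | exact: cvg_cst].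
apply/cvgrPdist_lt => e e_gt0; move: (geo_cvg _ (exprn_gt0 2 e_gt0)).
apply: filterS => k; rewrite sub0r normrN distrC => bound_lt.
apply: le_lt_trans (mx_norm_le_sqrt_sqnorm _) _.
rewrite -[e]gtr0_norm // -sqrtr_sqr ltr_sqrt ?exprn_gt0 //.
exact: le_lt_trans (geo k) (le_lt_trans (ler_norm _) bound_lt).
Qed.

End Convergence.

Lemma proj_gradient_step_contraction (R : realType) n (C : set 'cV[R]_n)
    (A : 'M[R]_n) (b x x' xs : 'cV[R]_n) (m L gamma : R) :
  (forall u v t, 0 <= t -> t <= 1 -> C u -> C v -> C (u + t *: (v - u))) ->
  A^T = A -> 0 <= m -> 0 < L ->
  (forall v, m * sqnorm2 v <= qf A v) -> (forall v, qf A v <= L * sqnorm2 v) ->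
  0 < gamma -> gamma * L <= 1 ->
  is_proj C (x - gamma *: (A *m x + b)) x' -> is_proj C (xs - gamma *: (A *m xs + b)) xs ->
  sqnorm2 (x' - xs) <= (1 - gamma * m) * sqnorm2 (x - xs).
Proof.
move=> C_convex symA m_ge0 L_gt0 m_le le_L gamma_gt0 gammaL x_proj xs_proj.
apply: le_trans (is_proj_nonexpansive C_convex x_proj xs_proj) _.
have -> : x - gamma *: (A *m x + b) - (xs - gamma *: (A *m xs + b)) =
    (x - xs) - gamma *: (A *m (x - xs)).
  by rewrite mulmxBr; apply/matrixP => i j; rewrite !mxE; lra.
exact: (gradient_step_contraction (x - xs) symA m_ge0 L_gt0 m_le le_L gamma_gt0 gammaL).
Qed.

Lemma quad_obj_optimal_exists (R : realType) n (A : 'M[R]_n) (b : 'cV[R]_n) (B : R) :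
  0 <= B -> exists xs, is_optimal A b B xs.
Proof.
move=> B_ge0.
have ball_neq0 : [set x : 'cV[R]_n | l1norm x <= B] !=set0.
  by exists 0; rewrite /= /l1norm big1 // => i _; rewrite mxE normr0.
have [xs xsB xs_min] := cV_min_attained ball_neq0
  (closed_preimage_le (c := B) (@l1norm_continuous R n))
  (fun v vB i => le_trans (coord_le_l1norm v i) vB) (quad_obj_continuous (A := A) (b := b)).
by exists xs.
Qed.

Unset Implicit Arguments.

Theorem proposition4 (R : realType) (n : nat) (A : 'M[R]_n) (b : 'cV[R]_n)
    (B L eta : R) :
  (0 < n)%N -> spd A -> 0 < B -> is_lambda_max A L ->
  0 < eta -> eta <= n%:R^-1 ->
  (* the network computes soft-thresholding for thresholds theta >= 0 *)
  (forall (theta : R) (y : 'cV[R]_n), 0 <= theta -> net theta y = soft theta y) /\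
  (* the threshold loop converges and yields the exact l1-ball projection *)
  (forall y : 'cV[R]_n, exists thetas : R,
      0 <= thetas /\ theta_seq eta B y @ \oo --> thetas /\
      is_l1ball_proj B y (net thetas y)) /\
  (* projected gradient descent with this loop *)
  (forall (gamma : R) (x : nat -> 'cV[R]_n),
      0 < gamma -> gamma <= L^-1 ->
      (forall k, let y := x k - gamma *: (A *m x k + b) in
                 x k.+1 = net (limn (theta_seq eta B y)) y) ->
      (forall k, is_l1ball_proj B (x k - gamma *: (A *m x k + b)) (x k.+1)) /\
      exists xs : 'cV[R]_n, is_optimal A b B xs /\ x @ \oo --> xs).
Proof.
move=> n_gt0 A_spd B_gt0 L_max eta_gt0 eta_le.
have loop_proj y := theta_seq_cvg_proj y n_gt0 B_gt0 eta_gt0 eta_le.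
split; first by move=> theta y; exact: net_soft.
split=> // gamma x gamma_gt0 gamma_le x_next.
have x_proj k : is_l1ball_proj B (x k - gamma *: (A *m x k + b)) (x k.+1).
  have [ths [_ [th_cvg ths_proj]]] := loop_proj (x k - gamma *: (A *m x k + b)).
  by rewrite x_next /= (cvg_lim _ th_cvg).
split=> //.
have [m [m_gt0 m_le_L m_le le_L]] := spd_qf_bounds n_gt0 A_spd L_max.
have L_gt0 : 0 < L := lt_le_trans m_gt0 m_le_L.
have gammaL : gamma * L <= 1 by rewrite -ler_pdivlMr // div1r.
have [xs [xsB xs_min]] := quad_obj_optimal_exists A b (ltW B_gt0).
exists xs; split => //.
have xs_fixed := quad_obj_min_is_proj (@l1ball_convex R n B) A_spd.1 gamma_gt0 xsB xs_min.
apply: (@geometric_cvg _ _ _ _ (1 - gamma * m)).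
- by rewrite subr_ge0 (le_trans _ gammaL) // ler_pM2l.
- by rewrite ltrBlDr ltrDl mulr_gt0.
- move=> k; apply: proj_gradient_step_contraction (@l1ball_convex R n B) A_spd.1
    (ltW m_gt0) L_gt0 m_le le_L gamma_gt0 gammaL (x_proj k) xs_fixed.
Qed.
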